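(* (i) If $\alpha<0$, there is a $\mathrm{TN}_3$ function $\Lambda:\mathbb{R}\to(0,\infty)$ such that $\Lambda^\alpha$ is not $\mathrm{TN}_3$ (e.g. $\Lambda(x)=e^{-x^2}$). (ii) Let $\alpha\ge0$, with the convention $0^0:=0$. Then $\Lambda^\alpha$ is $\mathrm{TN}_3$ for every $\mathrm{TN}_3$ function $\Lambda:\mathbb{R}\to\mathbb{R}$ if and only if $\alpha\ge1$.
   Context: A function $\Lambda:\mathbb{R}\to\mathbb{R}$ is $\mathrm{TN}_p$ if for all $1 \le r \le p$ and all real $x_1<\dots<x_r$, $y_1<\dots<y_r$, $\det(\Lambda(x_j-y_k))_{j,k=1}^r \ge 0$. $\Lambda^\alpha$ means $x\mapsto\Lambda(x)^\alpha$ (note $\mathrm{TN}_3$ functions are non-negative). *)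

From HB Require Import structures.
From mathcomp Require Import all_boot all_order all_algebra.
From mathcomp Require Import all_classical all_reals exp.
Set Implicit Arguments. Unset Strict Implicit. Unset Printing Implicit Defensive.
Import Order.TTheory GRing.Theory Num.Theory.
Local Open Scope ring_scope.

Definition TN (R : realType) (p : nat) (L : R -> R) : Prop :=
  forall r : nat, (1 <= r <= p)%N ->
  forall x y : 'I_r -> R,
    (forall i j : 'I_r, (i < j)%N -> x i < x j) ->
    (forall i j : 'I_r, (i < j)%N -> y i < y j) ->
    0 <= \det (\matrix_(j < r, k < r) L (x j - y k)).

Definition tnpow (R : realType) (a alpha : R) : R :=
  if a == 0 then 0 else powR a alpha.

From HB Require Import structures.
From mathcomp Require Import all_boot all_order all_algebra.
From mathcomp Require Import all_classical all_reals sequences exp trigo.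
From mathcomp Require Import ring lra.
Import Order.TTheory GRing.Theory Num.Theory.
Local Open Scope ring_scope.

(* By Desnanot-Jacobi condensation around the central
   entry e, e * minor3 = (diagonal minors product) - (off-diagonal minors
   product), so TN_3 is equivalent to nonnegativity of the 2x2 minors plus
   the "condensation inequality" wherever e > 0 (TN3_condensation and
   TN3_of_condensation; e = 0 is handled directly).

   (ii, alpha >= 1) The 2x2 minors of L ^ t are differences of t-th powers,
   hence stay nonnegative; the condensation inequality survives the power
   map by the mean value bounds for u |-> u ^ t coming from convexity
   (powR_increment_product_le).
   (i) The Gaussian exp(-x^2) is TN_3 by the same criterion, with exp in
   place of u ^ t; already a 2x2 minor of its negative powers is negative.
   (ii, alpha < 1) The truncated sine (sin on [0, pi], 0 elsewhere) is TN_3,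
   and an explicit 3x3 minor of its alpha-th power is negative. *)

Lemma det2 (R : comNzRingType) (M : 'M[R]_2) :
  \det M = M 0 0 * M 1 1 - M 0 1 * M 1 0.
Proof.
rewrite (expand_det_row _ ord0) !big_ord_recl big_ord0 addr0.
rewrite /cofactor !det_mx11 !mxE /= expr0 expr1 !mul1r mulN1r.
have -> : lift ord0 ord0 = 1 :> 'I_2 by apply/val_inj.
have -> : lift 1 0 = 0 :> 'I_2 by apply/val_inj.
ring.
Qed.

Lemma det3 (R : comNzRingType) (M : 'M[R]_3) :
  \det M = M 0 0 * (M 1 1 * M 2 2 - M 1 2 * M 2 1)
         - M 0 1 * (M 1 0 * M 2 2 - M 1 2 * M 2 0)
         + M 0 2 * (M 1 0 * M 2 1 - M 1 1 * M 2 0).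
Proof.
rewrite (expand_det_row _ ord0) !big_ord_recl big_ord0 addr0.
rewrite /cofactor !det2 !mxE /= expr0 expr1 expr2.
pose N (i j : nat) := M (inord i) (inord j).
have -> : M = \matrix_(i, j) N i j.
  by apply/matrixP => i j; rewrite mxE /N !inord_val.
rewrite !mxE /= /bump /=.
ring.
Qed.

Section TN3Minors.
Context {R : realType}.
Implicit Types (L : R -> R) (a b c : R).

Definition minor2 L x1 x2 y1 y2 :=
  L (x1 - y1) * L (x2 - y2) - L (x1 - y2) * L (x2 - y1).

Definition minor3 L x1 x2 x3 y1 y2 y3 :=
  L (x1 - y1) * minor2 L x2 x3 y2 y3 - L (x1 - y2) * minor2 L x2 x3 y1 y3
  + L (x1 - y3) * minor2 L x2 x3 y1 y2.

Definition pts2 a b (i : 'I_2) : R := [:: a; b]`_i.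
Definition pts3 a b c (i : 'I_3) : R := [:: a; b; c]`_i.

Lemma pts2_incr {a b} : a < b ->
  forall i j : 'I_2, (i < j)%N -> pts2 a b i < pts2 a b j.
Proof. by move=> ab [[|[|i]] Hi] [[|[|j]] Hj]. Qed.

Lemma pts3_incr {a b c} : a < b -> b < c ->
  forall i j : 'I_3, (i < j)%N -> pts3 a b c i < pts3 a b c j.
Proof.
by move=> ab bc [[|[|[|i]]] Hi] [[|[|[|j]]] Hj] //= _; rewrite /pts3 /=; lra.
Qed.

Lemma TN3_ge0 {L} : TN 3 L -> forall x, 0 <= L x.
Proof.
move=> HL x; have := HL 1%N isT (fun _ => x) (fun _ => 0).
by rewrite det_mx11 mxE subr0; apply; case=> [[|i] ?] [[|j] ?].
Qed.

Lemma TN3_minor2 {L} : TN 3 L ->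
  forall x1 x2 y1 y2, x1 < x2 -> y1 < y2 -> 0 <= minor2 L x1 x2 y1 y2.
Proof.
move=> HL x1 x2 y1 y2 hx hy.
by have := HL 2%N isT _ _ (pts2_incr hx) (pts2_incr hy); rewrite det2 !mxE.
Qed.

Lemma TN3_minor3 {L} : TN 3 L ->
  forall x1 x2 x3 y1 y2 y3, x1 < x2 -> x2 < x3 -> y1 < y2 -> y2 < y3 ->
  0 <= minor3 L x1 x2 x3 y1 y2 y3.
Proof.
move=> HL x1 x2 x3 y1 y2 y3 h1 h2 h3 h4.
have := HL 3%N isT _ _ (pts3_incr h1 h2) (pts3_incr h3 h4).
by rewrite det3 !mxE.
Qed.

Lemma TN3_intro L : (forall x, 0 <= L x) ->
  (forall x1 x2 y1 y2, x1 < x2 -> y1 < y2 -> 0 <= minor2 L x1 x2 y1 y2) ->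
  (forall x1 x2 x3 y1 y2 y3, x1 < x2 -> x2 < x3 -> y1 < y2 -> y2 < y3 ->
     0 <= minor3 L x1 x2 x3 y1 y2 y3) -> TN 3 L.
Proof.
move=> H1 H2 H3 [|[|[|[|r]]]] // _ x y Hx Hy.
- by rewrite det_mx11 mxE.
- by rewrite det2 !mxE; exact: H2 (Hx 0 1 isT) (Hy 0 1 isT).
- rewrite det3 !mxE.
  exact: H3 (Hx 0 1 isT) (Hx 1 2 isT) (Hy 0 1 isT) (Hy 1 2 isT).
Qed.

(* Desnanot-Jacobi condensation around the central entry L (x2 - y2): the
   3x3 minor is controlled by four contiguous 2x2 minors. *)
Lemma minor3_condensation L x1 x2 x3 y1 y2 y3 :
  L (x2 - y2) * minor3 L x1 x2 x3 y1 y2 y3 =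
  minor2 L x1 x2 y1 y2 * minor2 L x2 x3 y2 y3
  - minor2 L x1 x2 y2 y3 * minor2 L x2 x3 y1 y2.
Proof. rewrite /minor3 /minor2; ring. Qed.

Definition condensation_le L x1 x2 x3 y1 y2 y3 :=
  minor2 L x1 x2 y2 y3 * minor2 L x2 x3 y1 y2 <=
  minor2 L x1 x2 y1 y2 * minor2 L x2 x3 y2 y3.

Lemma TN3_condensation {L x1 x2 x3 y1 y2 y3} : TN 3 L ->
  x1 < x2 -> x2 < x3 -> y1 < y2 -> y2 < y3 -> 0 < L (x2 - y2) ->
  condensation_le L x1 x2 x3 y1 y2 y3.
Proof.
move=> HL h1 h2 h3 h4 e_gt0.
have := mulr_ge0 (ltW e_gt0) (TN3_minor3 HL _ _ _ _ _ _ h1 h2 h3 h4).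
by rewrite minor3_condensation subr_ge0.
Qed.

(* When the central entry
   vanishes, the diagonal minors force the products of their antidiagonal
   entries to vanish, leaving a sum of nonnegative terms. *)
Lemma minor3_ge0 L x1 x2 x3 y1 y2 y3 : (forall x, 0 <= L x) ->
  0 <= minor2 L x1 x2 y1 y2 -> 0 <= minor2 L x2 x3 y2 y3 ->
  (0 < L (x2 - y2) -> condensation_le L x1 x2 x3 y1 y2 y3) ->
  0 <= minor3 L x1 x2 x3 y1 y2 y3.
Proof.
move=> L0 M1 M2; rewrite /condensation_le.
have [e_gt0 /(_ isT)|e_le0 _] := ltP 0 (L (x2 - y2)).
  by rewrite -subr_ge0 -minor3_condensation pmulr_rge0.
have e0 : L (x2 - y2) = 0 by apply/le_anti; rewrite e_le0 L0.
have off_diag0 (u v : R) : 0 <= - (u * v) -> 0 <= u -> 0 <= v -> u * v = 0.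
  by rewrite oppr_ge0 => uv u0 v0; apply/le_anti; rewrite uv mulr_ge0.
move: M1 M2; rewrite /minor3 /minor2 e0 mulr0 mul0r !sub0r.
set a := L (x1 - y1); set b := L (x1 - y2); set c := L (x1 - y3).
set d := L (x2 - y1); set f := L (x2 - y3).
set g := L (x3 - y1); set h := L (x3 - y2); set i := L (x3 - y3).
move=> /off_diag0 /(_ (L0 _) (L0 _)) bd /off_diag0 /(_ (L0 _) (L0 _)) fh.
have -> : a * - (f * h) - b * (d * i - f * g) + c * (d * h - 0 * g)
          = b * f * g + c * d * h - a * (f * h) - b * d * i by ring.
by rewrite bd fh mulr0 mul0r !subr0 addr_ge0 // !mulr_ge0 ?L0.
Qed.

Lemma TN3_of_condensation L : (forall x, 0 <= L x) ->
  (forall x1 x2 y1 y2, x1 < x2 -> y1 < y2 -> 0 <= minor2 L x1 x2 y1 y2) ->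
  (forall x1 x2 x3 y1 y2 y3, x1 < x2 -> x2 < x3 -> y1 < y2 -> y2 < y3 ->
     0 < L (x2 - y2) -> condensation_le L x1 x2 x3 y1 y2 y3) ->
  TN 3 L.
Proof.
move=> L0 M C; apply: TN3_intro => // x1 x2 x3 y1 y2 y3 h1 h2 h3 h4.
apply: minor3_ge0 (M _ _ _ _ h1 h3) (M _ _ _ _ h2 h4) _ => //.
exact: C h1 h2 h3 h4.
Qed.

End TN3Minors.

Section RealPowers.
Context {R : realType}.
Implicit Types a b t u v : R.

Lemma tnpowE a t : t != 0 -> tnpow a t = powR a t.
Proof. by move=> t0; rewrite /tnpow; case: eqP => // ->; rewrite powR0. Qed.

Lemma powR_le_mono u v t : 0 <= t -> 0 <= u <= v -> powR u t <= powR v t.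
Proof.
move=> t0 /andP[u0 uv]; apply: ge0_ler_powR; rewrite ?nnegrE //.
exact: le_trans uv.
Qed.

(* Convexity of u |-> u ^ t for t >= 1: the graph lies above its tangent
   at b (derived from Young's inequality). *)
Lemma powR_tangent {a b t} : 0 <= a -> 0 <= b -> 1 <= t ->
  powR b t + t * powR b (t - 1) * (a - b) <= powR a t.
Proof.
move=> a0 b0; rewrite le_eqVlt => /predU1P[<-|t1].
  by rewrite subrr powRr0 !powRr1 //; lra.
have t0 : 0 < t by lra.
pose q := t / (t - 1).
have q0 : 0 < q by rewrite divr_gt0 //; lra.
have conj_exp : t^-1 + q^-1 = 1 by rewrite invf_div; field; lra.
have := conjugate_powR a0 (powR_ge0 b (t - 1)) t0 q0 conj_exp.
have -> : powR (powR b (t - 1)) q = powR b t.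
  by rewrite -powRrM; congr powR; rewrite /q; field; lra.
have b_powR : b * powR b (t - 1) = powR b t by rewrite mulr_powRB1.
move=> /(ler_wpM2l (ltW t0)).
have -> : t * (powR a t / t + powR b t / q) = powR a t + (t - 1) * powR b t.
  by rewrite /q; field; lra.
nra.
Qed.

Lemma powR_increment {u v t} : 0 <= u <= v -> 1 <= t ->
  t * powR u (t - 1) * (v - u) <= powR v t - powR u t <=
  t * powR v (t - 1) * (v - u).
Proof.
move=> /andP[u0 uv] t1; have v0 := le_trans u0 uv.
have lo := powR_tangent v0 u0 t1; have hi := powR_tangent u0 v0 t1.
apply/andP; split; lra.
Qed.

Lemma powR_increment_product_le X Y Z W B U D V t :
  0 <= Y <= X -> 0 <= W <= Z -> 0 <= U <= B -> 0 <= V <= D ->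
  Y * W = B * D -> (B - U) * (D - V) <= (X - Y) * (Z - W) -> 1 <= t ->
  (powR B t - powR U t) * (powR D t - powR V t) <=
  (powR X t - powR Y t) * (powR Z t - powR W t).
Proof.
move=> YX WZ UB VD YW_BD le_incr t1.
have /andP[_ BU] := powR_increment UB t1.
have /andP[_ DV] := powR_increment VD t1.
have /andP[XY _] := powR_increment YX t1.
have /andP[ZW _] := powR_increment WZ t1.
have t0 : 0 <= t by lra.
have BU0 : 0 <= powR B t - powR U t by rewrite subr_ge0 powR_le_mono.
have DV0 : 0 <= powR D t - powR V t by rewrite subr_ge0 powR_le_mono.
move: YX WZ UB VD.
move=> /andP[Y0 le_YX] /andP[W0 le_WZ] /andP[U0 le_UB] /andP[V0 le_VD].
have lower_eq :
  powR Y (t - 1) * powR W (t - 1) = powR B (t - 1) * powR D (t - 1).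
  by rewrite -!powRM ?YW_BD //; [exact: le_trans le_UB | exact: le_trans le_VD].
apply: le_trans (ler_pM BU0 DV0 BU DV) _.
apply: le_trans (ler_pM _ _ XY ZW); last 2 first.
- by rewrite !mulr_ge0 ?powR_ge0 //; lra.
- by rewrite !mulr_ge0 ?powR_ge0 //; lra.
have -> : t * powR B (t - 1) * (B - U) * (t * powR D (t - 1) * (D - V)) =
  t * t * (powR B (t - 1) * powR D (t - 1)) * ((B - U) * (D - V)) by ring.
have -> : t * powR Y (t - 1) * (X - Y) * (t * powR W (t - 1) * (Z - W)) =
  t * t * (powR Y (t - 1) * powR W (t - 1)) * ((X - Y) * (Z - W)) by ring.
by rewrite lower_eq; apply: ler_wpM2l; rewrite // !mulr_ge0 ?powR_ge0.
Qed.

End RealPowers.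

Section TN3Powers.
Context {R : realType}.
Implicit Types (L : R -> R) (t : R).

Lemma minor2_tnpow L t x1 x2 y1 y2 : t != 0 -> (forall x, 0 <= L x) ->
  minor2 (fun x => tnpow (L x) t) x1 x2 y1 y2 =
  powR (L (x1 - y1) * L (x2 - y2)) t - powR (L (x1 - y2) * L (x2 - y1)) t.
Proof. by move=> t0 L0; rewrite /minor2 !tnpowE // !powRM ?L0. Qed.

Lemma TN3_tnpow L t : 1 <= t -> TN 3 L -> TN 3 (fun x => tnpow (L x) t).
Proof.
move=> t1 HL; have t_gt0 : 0 < t by apply: lt_le_trans t1.
have t0 : t != 0 by rewrite gt_eqF.
have L0 := TN3_ge0 HL.
have ordered x1 x2 y1 y2 : x1 < x2 -> y1 < y2 ->
    0 <= L (x1 - y2) * L (x2 - y1) <= L (x1 - y1) * L (x2 - y2).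
  by move=> hx hy; rewrite mulr_ge0 ?L0 //= -subr_ge0 (TN3_minor2 HL).
apply: TN3_of_condensation.
- by move=> x; rewrite tnpowE // powR_ge0.
- move=> x1 x2 y1 y2 hx hy; rewrite minor2_tnpow // subr_ge0.
  by apply: powR_le_mono; [exact: ltW | exact: ordered].
move=> x1 x2 x3 y1 y2 y3 h1 h2 h3 h4 e_gt0.
have e_pos : 0 < L (x2 - y2).
  rewrite lt_neqAle L0 andbT; apply: contraTneq e_gt0 => <-.
  by rewrite /tnpow eqxx ltxx.
have := TN3_condensation HL h1 h2 h3 h4 e_pos.
rewrite /condensation_le !minor2_tnpow // /minor2 => C.
apply: powR_increment_product_le; rewrite ?ordered //; ring.
Qed.

End TN3Powers.

Section Gaussian.
Context {R : realType}.
Implicit Types P Q : R.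

Definition gauss (x : R) : R := expR (- x ^+ 2).

Lemma expR_increment P Q :
  expR Q * (P - Q) <= expR P - expR Q <= expR P * (P - Q).
Proof.
have EP : expR P = expR Q * expR (P - Q) by rewrite -expRD subrKC.
have EQ : expR Q = expR P * expR (Q - P) by rewrite -expRD subrKC.
have := expR_ge1Dx (P - Q); have := expR_ge1Dx (Q - P).
have := expR_gt0 P; have := expR_gt0 Q.
by move=> *; apply/andP; split; nra.
Qed.

Lemma expR_increment_product_le P1 Q1 P2 Q2 P3 Q3 P4 Q4 :
  Q1 <= P1 -> Q2 <= P2 -> Q3 <= P3 -> Q4 <= P4 ->
  P3 + P4 = Q1 + Q2 -> (P3 - Q3) * (P4 - Q4) = (P1 - Q1) * (P2 - Q2) ->
  (expR P3 - expR Q3) * (expR P4 - expR Q4) <=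
  (expR P1 - expR Q1) * (expR P2 - expR Q2).
Proof.
move=> QP1 QP2 QP3 QP4 sumE prodE.
have /andP[_ hi3] := expR_increment P3 Q3.
have /andP[_ hi4] := expR_increment P4 Q4.
have /andP[lo1 _] := expR_increment P1 Q1.
have /andP[lo2 _] := expR_increment P2 Q2.
have incr_ge0 P Q : Q <= P -> 0 <= expR P - expR Q by rewrite subr_ge0 ler_expR.
apply: le_trans (ler_pM (incr_ge0 _ _ QP3) (incr_ge0 _ _ QP4) hi3 hi4) _.
have -> : expR P3 * (P3 - Q3) * (expR P4 * (P4 - Q4)) =
          expR Q1 * (P1 - Q1) * (expR Q2 * (P2 - Q2)).
  have -> : expR P3 * (P3 - Q3) * (expR P4 * (P4 - Q4)) =
            expR (P3 + P4) * ((P3 - Q3) * (P4 - Q4)) by rewrite expRD; ring.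
  by rewrite sumE prodE expRD; ring.
by apply: ler_pM lo1 lo2; rewrite mulr_ge0 ?expR_ge0 ?subr_ge0.
Qed.

Lemma gauss_minor2 x1 x2 y1 y2 : minor2 gauss x1 x2 y1 y2 =
  expR (- (x1 - y1) ^+ 2 - (x2 - y2) ^+ 2) -
  expR (- (x1 - y2) ^+ 2 - (x2 - y1) ^+ 2).
Proof. by rewrite /minor2 /gauss -!expRD. Qed.

(* The Gaussian kernel is TN_3: all exponent increments are of the form
   2 (x' - x) (y' - y), so the condensation inequality reduces to the
   exponential comparison above. *)
Lemma gauss_TN3 : TN 3 gauss.
Proof.
apply: TN3_of_condensation.
- by move=> x; exact: expR_ge0.
- move=> x1 x2 y1 y2 hx hy; rewrite gauss_minor2 subr_ge0 ler_expR; nra.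
move=> x1 x2 x3 y1 y2 y3 h1 h2 h3 h4 _.
rewrite /condensation_le !gauss_minor2.
by apply: expR_increment_product_le; (ring || nra).
Qed.

Lemma gauss_tnpow_not_TN3 a : a < 0 -> ~ TN 3 (fun x => tnpow (gauss x) a).
Proof.
move=> a_lt0 /TN3_minor2 /(_ 0 1 0 1 ltr01 ltr01).
rewrite minor2_tnpow ?lt_eqF // => [|x]; last exact: expR_ge0.
rewrite /gauss -!expRD -!expRM !subrr subr0 sub0r sqrrN expr0n expr1n /=.
rewrite subr_ge0 ler_expR; lra.
Qed.

End Gaussian.

Section HalfSine.
Context {R : realType}.
Implicit Types z : R.

Definition arch z : bool := 0 <= z <= pi.

Lemma archI z : 0 <= z -> z <= pi -> arch z.
Proof. by move=> z0 zpi; apply/andP. Qed.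

Lemma sin_arch_ge0 z : 0 <= z -> z <= pi -> 0 <= sin z.
Proof. by move=> z0 zpi; apply/sin_ge0_pi/andP. Qed.

Definition half_sine z : R := if arch z then sin z else 0.

Lemma half_sine_in {z} : arch z -> half_sine z = sin z.
Proof. by rewrite /half_sine => ->. Qed.

Lemma half_sine_out {z} : ~~ arch z -> half_sine z = 0.
Proof. by rewrite /half_sine => /negbTE ->. Qed.

Lemma half_sine_ge0 z : 0 <= half_sine z.
Proof. by rewrite /half_sine; case: ifP => // /sin_ge0_pi. Qed.

Lemma sin_le_half_sine z : - pi <= z -> z <= pi *+ 2 -> sin z <= half_sine z.
Proof.
move=> z_ge z_le; have [/half_sine_in -> //|out] := boolP (arch z).
rewrite half_sine_out //; move: out; rewrite negb_and -!ltNge => /orP[z0|z_gt].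
- by rewrite -oppr_ge0 -sinN sin_arch_ge0 //; lra.
- have -> : sin z = - sin (z - pi) by rewrite -sinDpi subrK.
  by rewrite oppr_le0 sin_arch_ge0 //; move: z_le; rewrite mulr2n; lra.
Qed.

Lemma sin_minor2 (x1 x2 y1 y2 : R) :
  sin (x1 - y1) * sin (x2 - y2) - sin (x1 - y2) * sin (x2 - y1) =
  sin (x2 - x1) * sin (y2 - y1).
Proof. rewrite !sinB; ring. Qed.

Lemma half_sine_minor2_le x1 x2 y1 y2 : arch (x1 - y1) -> arch (x2 - y2) ->
  sin (x1 - y2) * sin (x2 - y1) <= half_sine (x1 - y2) * half_sine (x2 - y1) ->
  minor2 half_sine x1 x2 y1 y2 <= sin (x2 - x1) * sin (y2 - y1).
Proof.
move=> A1 A2 anti; rewrite /minor2 (half_sine_in A1) (half_sine_in A2).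
by rewrite -(sin_minor2 x1 x2 y1 y2) lerB.
Qed.

Lemma half_sine_minor2_le0 {x1 x2 y1 y2 : R} :
  ~~ (arch (x1 - y1) && arch (x2 - y2)) -> minor2 half_sine x1 x2 y1 y2 <= 0.
Proof.
case/nandP => out; rewrite /minor2 (half_sine_out out) ?mul0r ?mulr0 sub0r.
all: by rewrite oppr_le0 mulr_ge0 ?half_sine_ge0.
Qed.

(* The truncated sine is TN_2: its minors are zero or rank-one sine minors. *)
Lemma half_sine_minor2_ge0 x1 x2 y1 y2 : x1 < x2 -> y1 < y2 ->
  0 <= minor2 half_sine x1 x2 y1 y2.
Proof.
move=> hx hy; rewrite /minor2.
have [/andP[/andP[B0 Bpi] /andP[D0 Dpi]] | out] :=
  boolP (arch (x1 - y2) && arch (x2 - y1)); last first.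
  by case/nandP: out => out;
    rewrite (half_sine_out out) ?mul0r ?mulr0 subr0 mulr_ge0 ?half_sine_ge0.
rewrite !half_sine_in ?sin_minor2 ?archI //; try lra.
by rewrite mulr_ge0 // sin_arch_ge0 //; lra.
Qed.

(* Off the arch the off-diagonal minors are
   nonpositive; on it, the diagonal minors are sine minors and the
   off-diagonal ones are bounded by sine minors, whose products agree. *)
Lemma half_sine_TN3 : TN 3 half_sine.
Proof.
apply: TN3_of_condensation;
  [exact: half_sine_ge0 | exact: half_sine_minor2_ge0 |].
move=> x1 x2 x3 y1 y2 y3 h1 h2 h3 h4 _; rewrite /condensation_le.
have M1 := half_sine_minor2_ge0 _ _ _ _ h1 h3.
have M2 := half_sine_minor2_ge0 _ _ _ _ h2 h4.
have M3 := half_sine_minor2_ge0 _ _ _ _ h1 h4.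
have M4 := half_sine_minor2_ge0 _ _ _ _ h2 h3.
have [/andP[B F]|out] := boolP (arch (x1 - y2) && arch (x2 - y3)); last first.
  exact: le_trans (mulr_le0_ge0 (half_sine_minor2_le0 out) M4) (mulr_ge0 M1 M2).
have [/andP[D H]|out] := boolP (arch (x2 - y1) && arch (x3 - y2)); last first.
  exact: le_trans (mulr_ge0_le0 M3 (half_sine_minor2_le0 out)) (mulr_ge0 M1 M2).
move: (B) (F) (D) (H).
move=> /andP[B0 Bpi] /andP[F0 Fpi] /andP[D0 Dpi] /andP[H0 Hpi].
have E : arch (x2 - y2) by apply: archI; lra.
have K1 : minor2 half_sine x1 x2 y2 y3 <= sin (x2 - x1) * sin (y3 - y2).
  apply: half_sine_minor2_le => //; rewrite mulrC [X in _ <= X]mulrC.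
  by rewrite half_sine_in // ler_wpM2l ?sin_le_half_sine ?sin_arch_ge0 //;
    lra.
have K2 : minor2 half_sine x2 x3 y1 y2 <= sin (x3 - x2) * sin (y2 - y1).
  apply: half_sine_minor2_le => //.
  by rewrite half_sine_in // ler_wpM2l ?sin_le_half_sine ?sin_arch_ge0 //
    ?mulr2n; lra.
apply: le_trans (ler_pM M3 M4 K1 K2) _.
by rewrite /minor2 !half_sine_in ?sin_minor2 ?archI //; lra.
Qed.

Lemma cos_pi4 : cos (pi / 4) = sin (pi / 4 : R).
Proof. by rewrite -cosBpihalf -cosN; congr cos; field. Qed.

Lemma sin_pi4_sqr : sin (pi / 4) * sin (pi / 4) = 2^-1 :> R.
Proof.
have := @sin_pihalf R; rewrite (_ : pi / 2 = pi / 4 + pi / 4); last by field.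
by rewrite sinD cos_pi4; lra.
Qed.

Lemma half_lt_powR {a} : a < 1 -> 2^-1 < powR (2^-1) a :> R.
Proof.
move=> a1; have half_gt0 : (0 : R) < 2^-1 by rewrite invr_gt0 ltr0n.
have ln_half : ln (2^-1 : R) < 0.
  by apply: ln_lt0; rewrite half_gt0 /= invf_lt1 // ltr1n.
by rewrite /powR gt_eqF // -{1}(lnK half_gt0) ltr_expR; nra.
Qed.

(* For 0 <= a < 1 a 3x3 minor of half_sine ^ a is negative: at the nodes
   x = (0, q, 2q), y = (-2q, -q, 0) with q = pi / 4 the kernel matrix is
   [[1, p, 0]; [p, 1, p]; [0, p, 1]] with p = sin(pi/4) ^ a, whose
   determinant 1 - 2 p^2 = 1 - 2 (1/2)^a is negative. *)
Lemma half_sine_tnpow_not_TN3 a : 0 <= a -> a < 1 ->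
  ~ TN 3 (fun x => tnpow (half_sine x) a).
Proof.
move=> a0 a1 HL; pose q : R := pi / 4; pose p := powR (sin q) a.
have pi_pos := @pi_gt0 R.
have q_gt0 : 0 < q by rewrite divr_gt0.
have sin_q_gt0 : 0 < sin q by apply: sin_gt0_pi; rewrite q_gt0 /q; lra.
have top z : z = 2 * q -> tnpow (half_sine z) a = 1.
  move=> ->; rewrite half_sine_in ?archI /q; try lra.
  rewrite (_ : 2 * (pi / 4) = pi / 2); last by field.
  by rewrite sin_pihalf /tnpow oner_eq0 powR1.
have zero z : z = 0 \/ z = 4 * q -> tnpow (half_sine z) a = 0.
  move=> [|] ->; rewrite half_sine_in ?archI /q; try lra.
  - by rewrite sin0 /tnpow eqxx.
  - by rewrite (_ : 4 * (pi / 4) = pi) ?sinpi /tnpow ?eqxx //; field.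
have side z : z = q \/ z = 3 * q -> tnpow (half_sine z) a = p.
  move=> [|] ->; rewrite half_sine_in ?archI /q; try lra.
  - by rewrite /tnpow gt_eqF.
  - rewrite (_ : 3 * (pi / 4) = pi / 4 + pi / 2); last by field.
    by rewrite sinDpihalf cos_pi4 /tnpow gt_eqF.
have := TN3_minor3 HL 0 q (2 * q) (- (2 * q)) (- q) 0.
rewrite /minor3 /minor2 /=.
rewrite (top (0 - - (2 * q))) ?(top (q - - q)) ?(top (2 * q - 0)); try ring.
rewrite (zero (0 - 0)) ?(zero (2 * q - - (2 * q)));
  try by [left; ring | right; ring].
rewrite (side (0 - - q)) ?(side (q - 0)) ?(side (q - - (2 * q)));
  rewrite ?(side (2 * q - - q)); try by [left; ring | right; ring].
have p_sqr : p * p = powR (2^-1) a by rewrite -powRM ?sin_pi4_sqr // ltW.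
have := half_lt_powR a1; rewrite !mul1r !mulr1 !mul0r !mulr0 !subr0 p_sqr.
lra.
Qed.

End HalfSine.

Theorem mainTheorem18 (R : realType) :
  (forall alpha : R, alpha < 0 ->
     exists L : R -> R, (forall x, 0 < L x) /\ TN 3 L /\
       ~ TN 3 (fun x => tnpow (L x) alpha))
  /\
  (forall alpha : R, 0 <= alpha ->
     ((forall L : R -> R, TN 3 L -> TN 3 (fun x => tnpow (L x) alpha))
      <-> 1 <= alpha)).
Proof.
split.
- move=> a a_lt0; exists gauss; split; first by move=> x; exact: expR_gt0.
  by split; [exact: gauss_TN3 | exact: gauss_tnpow_not_TN3].
- move=> a a_ge0; split; last by move=> a_ge1 L; exact: TN3_tnpow.
  move=> preserves; rewrite leNgt; apply/negP => a_lt1.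
  exact: half_sine_tnpow_not_TN3 a_ge0 a_lt1 (preserves _ half_sine_TN3).
Qed.
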